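(* Let $\mathcal{R}_i=(X_i,\Phi_i,\check X_i,\check\Phi_i)$, $i\in\{1,2\}$, be root data and $f:\mathcal{R}_2\to\mathcal{R}_1$ a homomorphism of root data with $f:X_2\to X_1$ surjective. Put $A=X_1/f(\Phi_2^\top)$, let $h_1:X_1\to A$ be the natural projection and $h_2:X_2/\Phi_2^\top\to A$, $h_2(x+\Phi_2^\top)=f(x)+f(\Phi_2^\top)$. Then $\phi:X_2\to X_1\oplus(X_2/\Phi_2^\top)$, $\phi(x)=(f(x),x+\Phi_2^\top)$, defines an isomorphism of root data $\phi:\mathcal{R}_2\to\mathcal{R}_1\oplus_{(A,h_1,h_2)}(\mathcal{R}_2)_{\mathrm{rad}}$, and $f=p_1\circ\phi$, where $p_1$ is the projection of the central product onto its first factor.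
   Context: Root data $\mathcal{R}=(X,\Phi,\check X,\check\Phi)$ (reduced), with perfect pairing $\langle-,-\rangle$. A homomorphism of root data $\mathcal{R}'\to\mathcal{R}$ is a $\mathbb{Z}$-linear $f:X'\to X$ with a bijection $\tau:\Phi\to\Phi'$ with $f(\tau(\alpha))=\alpha$ and $\check f(\check\alpha)=\tau(\alpha)^\vee$ ($\check f$ the transpose). For $S\subseteq X$: $S^\top=\{x\in X: nx\in\mathbb{Z}S\text{ for some integer }n>0\}$, $S^\perp=\{y\in\check X:\langle x,y\rangle=0\ \forall x\in S\}$; similarly for subsets of $\check X$. The radical of $\mathcal{R}$ is the torus (root datum with no roots) $\mathcal{R}_{\mathrm{rad}}=(X/\Phi^\top,\emptyset,\check\Phi^\perp,\emptyset)$ with induced pairing. For a submodule $B\subseteq X$ containing $\Phi$, the induced root datum is $\mathcal{R}_B=(B,\Phi,\mathrm{Hom}(B,\mathbb{Z}),\check\iota_B(\check\Phi))$, $\check\iota_B(y)=\langle-,y\rangle|_B$. Central product: for root data $\mathcal{R},\mathcal{R}'$ with lattices $X,X'$, a $\mathbb{Z}$-module $A$ and surjections $h:X\to A$, $h':X'\to A$ killing the roots, $\mathcal{R}\oplus_{(A,h,h')}\mathcal{R}'$ is the root datum induced from the direct sum $\mathcal{R}\oplus\mathcal{R}'$ by the submodule $X\oplus_A X'=\{(x,x'): h(x)=h'(x')\}$. *)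

(* Lattices are modelled as a carrier type
   with a membership predicate and operations; all axioms are stated as
   predicates (is_lattice, is_root_datum) and only quantify over members. *)
From Stdlib Require Import ZArith List Classical ClassicalEpsilon
  FunctionalExtensionality PropExtensionality.
Open Scope Z_scope.

Record lattice := Lattice {
  lcar :> Type;
  lmem : lcar -> Prop;
  l0 : lcar;
  ladd : lcar -> lcar -> lcar;
  lopp : lcar -> lcar }.
Arguments lmem {l} _.
Arguments l0 {l}.
Arguments ladd {l} _ _.
Arguments lopp {l} _.

Definition lsub {L : lattice} (x y : L) : L := ladd x (lopp y).

Fixpoint nmul {L : lattice} (n : nat) (x : L) : L :=
  match n with O => l0 | S n' => ladd x (nmul n' x) end.

Definition zmul {L : lattice} (z : Z) (x : L) : L :=
  match z with
  | Z0 => l0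
  | Zpos p => nmul (Pos.to_nat p) x
  | Zneg p => lopp (nmul (Pos.to_nat p) x)
  end.

Fixpoint lincomb {L : lattice} (c : list Z) (b : list L) : L :=
  match c, b with
  | c0 :: c', b0 :: b' => ladd (zmul c0 b0) (lincomb c' b')
  | _, _ => l0
  end.

Definition is_abgroup (L : lattice) : Prop :=
  lmem (@l0 L) /\
  (forall x y : L, lmem x -> lmem y -> lmem (ladd x y)) /\
  (forall x : L, lmem x -> lmem (lopp x)) /\
  (forall x y z : L, lmem x -> lmem y -> lmem z ->
     ladd x (ladd y z) = ladd (ladd x y) z) /\
  (forall x y : L, lmem x -> lmem y -> ladd x y = ladd y x) /\
  (forall x : L, lmem x -> ladd l0 x = x) /\
  (forall x : L, lmem x -> ladd (lopp x) x = l0).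

Definition free_finite_rank (L : lattice) : Prop :=
  exists b : list L, Forall lmem b /\
    forall x : L, lmem x ->
      exists! c : list Z, length c = length b /\ lincomb c b = x.

Definition is_lattice (L : lattice) : Prop := is_abgroup L /\ free_finite_rank L.

Definition additive_map {L M : lattice} (f : L -> M) : Prop :=
  (forall x, lmem x -> lmem (f x)) /\
  (forall x y, lmem x -> lmem y -> f (ladd x y) = ladd (f x) (f y)).

Definition additive_Z {L : lattice} (g : L -> Z) : Prop :=
  forall x y, lmem x -> lmem y -> g (ladd x y) = g x + g y.

Definition injective_on {L M : lattice} (f : L -> M) : Prop :=
  forall x y, lmem x -> lmem y -> f x = f y -> x = y.
Definition surjective_on {L M : lattice} (f : L -> M) : Prop :=
  forall y, lmem y -> exists x, lmem x /\ f x = y.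

Definition in_span {L : lattice} (S : L -> Prop) (x : L) : Prop :=
  exists (c : list Z) (b : list L), Forall S b /\ lincomb c b = x.

Definition saturation {L : lattice} (S : L -> Prop) (x : L) : Prop :=
  lmem x /\ exists n : Z, n > 0 /\ in_span S (zmul n x).

Definition image {L M : lattice} (f : L -> M) (S : L -> Prop) (y : M) : Prop :=
  exists x, lmem x /\ S x /\ y = f x.

(* quotient L / S : elements are cosets x + S (as subsets of L) *)
Definition qclass {L : lattice} (S : L -> Prop) (x : L) : L -> Prop :=
  fun y => lmem y /\ S (lsub y x).
Definition qrep {L : lattice} (S : L -> Prop) (q : L -> Prop) : L :=
  epsilon (inhabits (@l0 L)) (fun x => lmem x /\ q = qclass S x).
Definition quot (L : lattice) (S : L -> Prop) : lattice :=
  {| lcar := L -> Prop;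
     lmem := fun q => exists x, lmem x /\ q = qclass S x;
     l0 := qclass S l0;
     ladd := fun p q => qclass S (ladd (qrep S p) (qrep S q));
     lopp := fun p => qclass S (lopp (qrep S p)) |}.
Definition qproj {L : lattice} (S : L -> Prop) (x : L) : quot L S := qclass S x.

Definition sublat (L : lattice) (P : L -> Prop) : lattice :=
  {| lcar := lcar L; lmem := fun x => lmem x /\ P x;
     l0 := l0; ladd := ladd; lopp := lopp |}.

Definition prodlat (L M : lattice) : lattice :=
  {| lcar := (lcar L * lcar M)%type;
     lmem := fun p => lmem (fst p) /\ lmem (snd p);
     l0 := (l0, l0);
     ladd := fun p q => (ladd (fst p) (fst q), ladd (snd p) (snd q));
     lopp := fun p => (lopp (fst p), lopp (snd p)) |}.

(* Hom(L, Z): Z-linear forms on L (normalised to vanish off L) *)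
Definition homlat (L : lattice) : lattice :=
  {| lcar := lcar L -> Z;
     lmem := fun g => additive_Z g /\ (forall x, ~ lmem x -> g x = 0);
     l0 := fun _ => 0;
     ladd := fun g h x => g x + h x;
     lopp := fun g x => - g x |}.

(* (X, Phi, Xc, Phic): roots are the predicate Rroots on X, the bijection
   Phi -> Phic is alpha |-> Rcor alpha (so Phic = Rcor(Phi)). *)
Record preRootDatum := PreRootDatum {
  RX : lattice;
  RXc : lattice;
  Rpair : RX -> RXc -> Z;
  Rroots : RX -> Prop;
  Rcor : RX -> RXc }.

Definition perfect_pairing {L M : lattice} (pr : L -> M -> Z) : Prop :=
  (forall x, lmem x -> additive_Z (pr x)) /\
  (forall y, lmem y -> additive_Z (fun x => pr x y)) /\
  (forall g : M -> Z, additive_Z g ->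
     exists x, lmem x /\ (forall y, lmem y -> g y = pr x y) /\
       forall x', lmem x' -> (forall y, lmem y -> g y = pr x' y) -> x' = x) /\
  (forall g : L -> Z, additive_Z g ->
     exists y, lmem y /\ (forall x, lmem x -> g x = pr x y) /\
       forall y', lmem y' -> (forall x, lmem x -> g x = pr x y') -> y' = y).

(* reduced root datum *)
Definition is_root_datum (R : preRootDatum) : Prop :=
  is_lattice (RX R) /\ is_lattice (RXc R) /\
  perfect_pairing (Rpair R) /\
  (forall a, Rroots R a -> lmem a) /\
  (exists l : list (RX R), forall a, Rroots R a <-> In a l) /\
  (forall a, Rroots R a -> lmem (Rcor R a)) /\
  (forall a b, Rroots R a -> Rroots R b -> Rcor R a = Rcor R b -> a = b) /\
  (forall a, Rroots R a -> Rpair R a (Rcor R a) = 2) /\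
  (forall a b, Rroots R a -> Rroots R b ->
     Rroots R (lsub b (zmul (Rpair R b (Rcor R a)) a))) /\
  (* s_{a^v}(Phic) = Phic, s_{a^v}(y) = y - <a, y> a^v *)
  (forall a b, Rroots R a -> Rroots R b ->
     exists c, Rroots R c /\
       Rcor R c = lsub (Rcor R b) (zmul (Rpair R a (Rcor R b)) (Rcor R a))) /\
  (forall a, Rroots R a -> ~ Rroots R (zmul 2 a)).

Definition is_hom (R' R : preRootDatum) (f : RX R' -> RX R) : Prop :=
  additive_map f /\
  exists tau : RX R -> RX R',
    (forall a, Rroots R a -> Rroots R' (tau a)) /\
    (forall a b, Rroots R a -> Rroots R b -> tau a = tau b -> a = b) /\
    (forall a', Rroots R' a' -> exists a, Rroots R a /\ tau a = a') /\
    (forall a, Rroots R a -> f (tau a) = a) /\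
    exists fc : RXc R -> RXc R',
      additive_map fc /\
      (forall x' y, lmem x' -> lmem y -> Rpair R' x' (fc y) = Rpair R (f x') y) /\
      (forall a, Rroots R a -> fc (Rcor R a) = Rcor R' (tau a)).

Definition is_iso (R' R : preRootDatum) (f : RX R' -> RX R) : Prop :=
  is_hom R' R f /\ injective_on f /\ surjective_on f.

Definition root_perp (R : preRootDatum) (y : RXc R) : Prop :=
  forall a, Rroots R a -> Rpair R a y = 0.
Definition rad_lattice (R : preRootDatum) : lattice :=
  quot (RX R) (saturation (Rroots R)).
Definition radical (R : preRootDatum) : preRootDatum :=
  {| RX := rad_lattice R;
     RXc := sublat (RXc R) (root_perp R);
     Rpair := fun q y => Rpair R (qrep (saturation (Rroots R)) q) y;
     Rroots := fun _ => False;
     Rcor := fun _ => l0 |}.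

Definition dsum (R R' : preRootDatum) : preRootDatum :=
  {| RX := prodlat (RX R) (RX R');
     RXc := prodlat (RXc R) (RXc R');
     Rpair := fun p q => Rpair R (fst p) (fst q) + Rpair R' (snd p) (snd q);
     Rroots := fun p => (Rroots R (fst p) /\ snd p = l0) \/
                        (fst p = l0 /\ Rroots R' (snd p));
     Rcor := fun p =>
       if excluded_middle_informative (Rroots R (fst p))
       then (Rcor R (fst p), l0) else (l0, Rcor R' (snd p)) |}.

Definition iotaB (R : preRootDatum) (B : RX R -> Prop) (y : RXc R)
  : homlat (sublat (RX R) B) :=
  fun x => if excluded_middle_informative (lmem x /\ B x) then Rpair R x y else 0.
Definition induced (R : preRootDatum) (B : RX R -> Prop) : preRootDatum :=
  {| RX := sublat (RX R) B;
     RXc := homlat (sublat (RX R) B);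
     Rpair := fun x g => g x;
     Rroots := Rroots R;
     Rcor := fun a => iotaB R B (Rcor R a) |}.

Definition central_product (R R' : preRootDatum) (A : lattice)
  (h : RX R -> A) (h' : RX R' -> A) : preRootDatum :=
  induced (dsum R R') (fun p => h (fst p) = h' (snd p)).

(* The map x |-> (f x, x + Phi2^T) is additive, and onto the fibre product
   X1 (+)_A X2/Phi2^T because x1 = f x mod f(Phi2^T) means x1 = f (x + s) with
   s in Phi2^T.  Its kernel consists of the z in Phi2^T with f z = 0, and such a z
   pairs trivially with every coroot (tau a)^v = f^v a^v.  The Weyl-invariant
   positive semidefinite form B(y, w) = sum_a <a, y> <a, w> writes <n z, -> as
   B(-, w) / M for some w killing (Phi2^v)^perp, so B(w, w) = 0, w is orthogonal to
   all roots, and z = 0.  Finally the coroots of the central product are the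
   images of those of R2 under the inverse transpose of the embedding, so the
   root datum axioms and the isomorphism transport along this pair of maps. *)

From Stdlib Require Import ZArith List.
From Stdlib Require Import Lia ClassicalEpsilon
  FunctionalExtensionality PropExtensionality Permutation.
Open Scope Z_scope.

Create HintDb lat.

Section AbelianGroup.
Variable L : lattice.
Hypothesis HL : is_abgroup L.

Lemma lmem0 : lmem (@l0 L). Proof. apply HL. Qed.
Lemma lmemD (x y : L) : lmem x -> lmem y -> lmem (ladd x y). Proof. apply HL. Qed.
Lemma lmemN (x : L) : lmem x -> lmem (lopp x). Proof. apply HL. Qed.
Lemma laddA (x y z : L) : lmem x -> lmem y -> lmem z ->
  ladd x (ladd y z) = ladd (ladd x y) z.
Proof. apply HL. Qed.
Lemma laddC (x y : L) : lmem x -> lmem y -> ladd x y = ladd y x. Proof. apply HL. Qed.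
Lemma ladd0l (x : L) : lmem x -> ladd l0 x = x. Proof. apply HL. Qed.
Lemma laddNl (x : L) : lmem x -> ladd (lopp x) x = l0. Proof. apply HL. Qed.

#[local] Hint Resolve lmem0 lmemD lmemN : lat.

Lemma ladd0r (x : L) : lmem x -> ladd x l0 = x.
Proof. intros; rewrite laddC; auto with lat; apply ladd0l; auto. Qed.
Lemma laddNr (x : L) : lmem x -> ladd x (lopp x) = l0.
Proof. intros; rewrite laddC; auto with lat; apply laddNl; auto. Qed.
Lemma laddKl (x y : L) : lmem x -> lmem y -> ladd (lopp x) (ladd x y) = y.
Proof. intros; rewrite laddA, laddNl, ladd0l; auto with lat. Qed.
Lemma laddI (x y z : L) : lmem x -> lmem y -> lmem z -> ladd x y = ladd x z -> y = z.
Proof. intros Hx Hy Hz E. rewrite <- (laddKl x y), <- (laddKl x z), E; auto. Qed.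
Lemma loppK (x : L) : lmem x -> lopp (lopp x) = x.
Proof. intros. apply (laddI (lopp x)); auto with lat. rewrite laddNr, laddNl; auto with lat. Qed.
Lemma lopp0 : lopp (@l0 L) = l0.
Proof. apply (laddI l0); auto with lat. rewrite laddNr, ladd0l; auto with lat. Qed.
Lemma laddACA (a b c d : L) : lmem a -> lmem b -> lmem c -> lmem d ->
  ladd (ladd a b) (ladd c d) = ladd (ladd a c) (ladd b d).
Proof.
  intros. rewrite <- !laddA by auto with lat. f_equal.
  rewrite !laddA by auto with lat. f_equal. apply laddC; auto.
Qed.
Lemma loppD (x y : L) : lmem x -> lmem y -> lopp (ladd x y) = ladd (lopp x) (lopp y).
Proof.
  intros. apply (laddI (ladd x y)); auto with lat.
  rewrite laddACA, !laddNr, ladd0l; auto with lat.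
Qed.

Lemma lmemB (x y : L) : lmem x -> lmem y -> lmem (lsub x y).
Proof. unfold lsub; auto with lat. Qed.
#[local] Hint Resolve lmemB : lat.

Lemma lsubDD (a b c d : L) : lmem a -> lmem b -> lmem c -> lmem d ->
  lsub (ladd a b) (ladd c d) = ladd (lsub a c) (lsub b d).
Proof. intros; unfold lsub. rewrite loppD, laddACA; auto with lat. Qed.
Lemma lsubNN (a c : L) : lmem a -> lmem c -> lsub (lopp a) (lopp c) = lopp (lsub a c).
Proof. intros; unfold lsub. rewrite loppD, loppK; auto with lat. Qed.
Lemma lsubrr (a : L) : lmem a -> lsub a a = l0.
Proof. apply laddNr. Qed.
Lemma lsubr0 (a : L) : lmem a -> lsub a l0 = a.
Proof. intros; unfold lsub; rewrite lopp0, ladd0r; auto. Qed.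
Lemma loppB (a b : L) : lmem a -> lmem b -> lopp (lsub a b) = lsub b a.
Proof. intros; unfold lsub. rewrite loppD, loppK, laddC; auto with lat. Qed.
Lemma lsub_trans (a b c : L) : lmem a -> lmem b -> lmem c ->
  ladd (lsub a b) (lsub b c) = lsub a c.
Proof.
  intros; unfold lsub. rewrite <- laddA by auto with lat. f_equal.
  rewrite laddA, laddNl, ladd0l; auto with lat.
Qed.
Lemma lsubK (a b : L) : lmem a -> lmem b -> ladd (lsub a b) b = a.
Proof. intros; unfold lsub. rewrite <- laddA, laddNl, ladd0r; auto with lat. Qed.
Lemma lsub_eq0 (a b : L) : lmem a -> lmem b -> lsub a b = l0 -> a = b.
Proof. intros Ha Hb E. rewrite <- (lsubK a b), E, ladd0l; auto. Qed.

Lemma lmem_nmul n (x : L) : lmem x -> lmem (nmul n x).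
Proof. induction n; simpl; auto with lat. Qed.
Lemma lmem_zmul z (x : L) : lmem x -> lmem (zmul z x).
Proof. destruct z; simpl; auto using lmem_nmul with lat. Qed.
#[local] Hint Resolve lmem_nmul lmem_zmul : lat.

Lemma zmulS z (x : L) : lmem x -> zmul (Z.succ z) x = ladd x (zmul z x).
Proof.
  intros Hx. destruct z as [|p|p].
  - simpl. rewrite ladd0r; auto.
  - simpl. replace (Pos.to_nat (p+1)) with (S (Pos.to_nat p)) by lia. reflexivity.
  - destruct (Pos.eq_dec p 1) as [->|Hp].
    + simpl. rewrite ladd0r, laddNr; auto.
    + replace (Z.succ (Z.neg p)) with (Z.neg (Pos.pred p)) by lia. simpl.
      replace (Pos.to_nat p) with (S (Pos.to_nat (Pos.pred p))) by lia. simpl.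
      rewrite loppD, laddA, laddNr, ladd0l; auto with lat.
Qed.
Lemma zmulP z (x : L) : lmem x -> zmul (Z.pred z) x = ladd (lopp x) (zmul z x).
Proof.
  intros Hx. rewrite <- (Z.succ_pred z) at 2. rewrite zmulS by auto.
  rewrite laddKl; auto with lat.
Qed.
Lemma zmulDl a b (x : L) : lmem x -> zmul (a + b) x = ladd (zmul a x) (zmul b x).
Proof.
  intros Hx. induction a using Z.peano_ind.
  - simpl. rewrite ladd0l; auto with lat.
  - replace (Z.succ a + b) with (Z.succ (a + b)) by lia.
    rewrite !zmulS, IHa, laddA; auto with lat.
  - replace (Z.pred a + b) with (Z.pred (a + b)) by lia.
    rewrite !zmulP, IHa, laddA; auto with lat.
Qed.
Lemma zmulDr a (x y : L) : lmem x -> lmem y ->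
  zmul a (ladd x y) = ladd (zmul a x) (zmul a y).
Proof.
  intros Hx Hy. induction a using Z.peano_ind.
  - simpl. rewrite ladd0l; auto with lat.
  - rewrite !zmulS, IHa, laddACA; auto with lat.
  - rewrite !zmulP, IHa, loppD, laddACA; auto with lat.
Qed.
Lemma zmulN a (x : L) : lmem x -> zmul (- a) x = lopp (zmul a x).
Proof.
  intros Hx. apply (laddI (zmul a x)); auto with lat.
  rewrite <- zmulDl, laddNr by auto with lat. now replace (a + - a) with 0 by lia.
Qed.
Lemma zmulM a b (x : L) : lmem x -> zmul (a * b) x = zmul a (zmul b x).
Proof.
  intros Hx. induction a using Z.peano_ind.
  - reflexivity.
  - replace (Z.succ a * b) with (b + a * b) by lia.
    rewrite zmulDl, zmulS, IHa; auto with lat.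
  - replace (Z.pred a * b) with (- b + a * b) by lia.
    rewrite zmulDl, zmulP, IHa, zmulN; auto with lat.
Qed.
Lemma zmul0r a : zmul a (@l0 L) = l0.
Proof.
  induction a using Z.peano_ind.
  - reflexivity.
  - rewrite zmulS, IHa, ladd0l; auto with lat.
  - rewrite zmulP, IHa, lopp0, ladd0l; auto with lat.
Qed.
Lemma zmulNr a (x : L) : lmem x -> zmul a (lopp x) = lopp (zmul a x).
Proof.
  intros. apply (laddI (zmul a x)); auto with lat.
  rewrite <- zmulDr, !laddNr, zmul0r; auto with lat.
Qed.
Lemma zmulN1 (x : L) : lmem x -> zmul (-1) x = lopp x.
Proof. intros. simpl. rewrite ladd0r; auto. Qed.

Lemma lmem_lincomb c (b : list L) : Forall lmem b -> lmem (lincomb c b).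
Proof.
  revert c; induction b; intros [|c0 c] Hb; simpl; auto with lat.
  inversion Hb; subst; auto with lat.
Qed.

End AbelianGroup.

#[global] Hint Resolve lmem0 lmemD lmemN lmemB lmem_nmul lmem_zmul lmem_lincomb : lat.

Definition group_map {L M : lattice} (phi : L -> M) : Prop :=
  additive_map phi /\ (forall x, lmem x -> phi (lopp x) = lopp (phi x)) /\ phi l0 = l0.

Section GroupMaps.
Variables L M : lattice.
Hypothesis HL : is_abgroup L.
Variable phi : L -> M.
Hypothesis Hphi : group_map phi.

Lemma gmap_mem x : lmem x -> lmem (phi x). Proof. apply Hphi. Qed.
Lemma gmapD x y : lmem x -> lmem y -> phi (ladd x y) = ladd (phi x) (phi y).
Proof. apply Hphi. Qed.
Lemma gmapN x : lmem x -> phi (lopp x) = lopp (phi x). Proof. apply Hphi. Qed.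
Lemma gmap0 : phi l0 = l0. Proof. apply Hphi. Qed.
Lemma gmapB x y : lmem x -> lmem y -> phi (lsub x y) = lsub (phi x) (phi y).
Proof. intros; unfold lsub; rewrite gmapD, gmapN; auto with lat. Qed.

Lemma gmap_zmul z x : lmem x -> phi (zmul z x) = zmul z (phi x).
Proof.
  intros Hx.
  assert (Hn : forall n, phi (nmul n x) = nmul n (phi x)).
  { induction n; simpl; [apply gmap0|]. rewrite gmapD, IHn; auto with lat. }
  destruct z; simpl; [apply gmap0|apply Hn|rewrite gmapN, Hn; auto with lat].
Qed.

Lemma gmap_lincomb c b : Forall lmem b -> phi (lincomb c b) = lincomb c (map phi b).
Proof.
  revert c; induction b; intros [|c0 c] Hb; simpl; auto using gmap0.
  inversion Hb; subst. rewrite gmapD, gmap_zmul, IHb; auto with lat.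
Qed.

Hypothesis Hsurj : surjective_on phi.

Lemma abgroup_transport : is_abgroup M.
Proof.
  pose proof gmap_mem. pose proof gmapD.
  split; [|split; [|split; [|split; [|split; [|split]]]]].
  - rewrite <- gmap0; auto with lat.
  - intros x y Hx Hy. destruct (Hsurj x Hx) as (a & Ha & <-).
    destruct (Hsurj y Hy) as (b & Hb & <-). rewrite <- gmapD; auto with lat.
  - intros x Hx. destruct (Hsurj x Hx) as (a & Ha & <-). rewrite <- gmapN; auto with lat.
  - intros x y z Hx Hy Hz. destruct (Hsurj x Hx) as (a & Ha & <-).
    destruct (Hsurj y Hy) as (b & Hb & <-). destruct (Hsurj z Hz) as (c & Hc & <-).
    rewrite <- !gmapD by auto with lat. rewrite laddA; auto.
  - intros x y Hx Hy. destruct (Hsurj x Hx) as (a & Ha & <-).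
    destruct (Hsurj y Hy) as (b & Hb & <-). rewrite <- !gmapD by auto. rewrite laddC; auto.
  - intros x Hx. destruct (Hsurj x Hx) as (a & Ha & <-).
    rewrite <- gmap0, <- gmapD, ladd0l; auto with lat.
  - intros x Hx. destruct (Hsurj x Hx) as (a & Ha & <-).
    rewrite <- gmapN, <- gmapD, laddNl, gmap0; auto with lat.
Qed.

Hypothesis Hinj : injective_on phi.

Lemma free_transport : free_finite_rank L -> free_finite_rank M.
Proof.
  intros (b & Hb & Hu). exists (map phi b). split.
  - apply Forall_map. eapply Forall_impl; [apply gmap_mem|]; auto.
  - intros y Hy. destruct (Hsurj y Hy) as (x & Hx & <-).
    destruct (Hu x Hx) as (c & [Hc1 Hc2] & Hc3). exists c. split.
    + rewrite length_map, <- gmap_lincomb, Hc2; auto.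
    + intros c' [E1 E2]. rewrite length_map in E1. apply Hc3. split; auto.
      apply Hinj; auto with lat. rewrite gmap_lincomb; auto.
Qed.

Lemma lattice_transport : is_lattice L -> is_lattice M.
Proof. intros [_ Hfree]. split; [apply abgroup_transport|apply free_transport; auto]. Qed.

End GroupMaps.

Arguments gmap_mem {L M phi}.
Arguments gmapD {L M phi}.
Arguments gmapN {L M phi}.
Arguments gmap0 {L M phi}.
Arguments gmapB {L M} HL {phi}.
Arguments gmap_zmul {L M} HL {phi}.

Lemma additive_group_map {L M : lattice} (phi : L -> M) :
  is_abgroup L -> is_abgroup M -> additive_map phi -> group_map phi.
Proof.
  intros HL HM [Hm Ha].
  assert (H0 : phi l0 = l0).
  { apply (laddI _ HM (phi l0)); auto with lat. rewrite ladd0r, <- Ha, ladd0l; auto with lat. }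
  split; [split; auto|split; auto].
  intros x Hx. apply (laddI _ HM (phi x)); auto with lat.
  rewrite <- Ha, !laddNr, H0; auto with lat.
Qed.

Definition inv_on {L M : lattice} (phi : L -> M) (y : M) : L :=
  epsilon (inhabits l0) (fun x => lmem x /\ phi x = y).

Lemma inv_onP {L M : lattice} (phi : L -> M) y : surjective_on phi -> lmem y ->
  lmem (inv_on phi y) /\ phi (inv_on phi y) = y.
Proof. intros Hs Hy. unfold inv_on. apply epsilon_spec, Hs, Hy. Qed.

Lemma inv_onK {L M : lattice} (phi : L -> M) x : injective_on phi -> lmem x ->
  inv_on phi (phi x) = x.
Proof.
  intros Hi Hx. unfold inv_on. destruct (epsilon_spec (inhabits l0) (fun u => lmem u /\ phi u = phi x))
    as [A B]; eauto.
Qed.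

Section AdditiveZ.
Variable L : lattice.
Hypothesis HL : is_abgroup L.
Variable g : L -> Z.
Hypothesis Hg : additive_Z g.

Lemma additiveZ_0 : g l0 = 0.
Proof. pose proof (Hg l0 l0 (lmem0 _ HL) (lmem0 _ HL)) as E. rewrite ladd0l in E; auto with lat; lia. Qed.
Lemma additiveZ_N x : lmem x -> g (lopp x) = - g x.
Proof.
  intros Hx. assert (E := Hg (lopp x) x (lmemN _ HL _ Hx) Hx).
  rewrite (laddNl _ HL x Hx), additiveZ_0 in E. lia.
Qed.
Lemma additiveZ_B x y : lmem x -> lmem y -> g (lsub x y) = g x - g y.
Proof. intros; unfold lsub; rewrite Hg, additiveZ_N; auto with lat; lia. Qed.
Lemma additiveZ_zmul n x : lmem x -> g (zmul n x) = n * g x.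
Proof.
  intros Hx. induction n using Z.peano_ind.
  - apply additiveZ_0.
  - rewrite zmulS, Hg, IHn; auto with lat; lia.
  - rewrite zmulP, Hg, additiveZ_N, IHn; auto with lat; lia.
Qed.
End AdditiveZ.

Definition subgrp {L : lattice} (S : L -> Prop) : Prop :=
  (forall x, S x -> lmem x) /\ S l0 /\
  (forall x y, S x -> S y -> S (ladd x y)) /\ (forall x, S x -> S (lopp x)).

Section Span.
Variable L : lattice.
Hypothesis HL : is_abgroup L.

Lemma lincomb_firstn (c : list Z) (b : list L) :
  lincomb c b = lincomb (firstn (length b) c) (firstn (length c) b) /\
  length (firstn (length b) c) = length (firstn (length c) b).
Proof.
  revert c; induction b; intros [|c0 c]; simpl; auto.
  destruct (IHb c) as [A B]. rewrite <- A, B. auto.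
Qed.

Lemma lincomb_app c c' (b b' : list L) : length c = length b ->
  Forall lmem b -> Forall lmem b' ->
  lincomb (c ++ c') (b ++ b') = ladd (lincomb c b) (lincomb c' b').
Proof.
  intros E Hb Hb'. revert c E; induction b; intros [|c0 c] E; simpl in *; try discriminate.
  - rewrite ladd0l; auto with lat.
  - inversion Hb; subst. rewrite IHb, laddA; auto with lat.
Qed.

Lemma zmul_lincomb n c (b : list L) : Forall lmem b ->
  zmul n (lincomb c b) = lincomb (map (Z.mul n) c) b.
Proof.
  revert c; induction b; intros [|c0 c] Hb; simpl; try apply zmul0r; auto.
  inversion Hb; subst. rewrite zmulDr, IHb, zmulM; auto with lat.
Qed.

Variable S : L -> Prop.
Hypothesis HS : forall x, S x -> lmem x.

Lemma in_spanD x y : in_span S x -> in_span S y -> in_span S (ladd x y).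
Proof.
  intros (c & b & Hb & <-) (d & e & He & <-).
  destruct (lincomb_firstn c b) as [E1 E2]. rewrite E1.
  assert (Hb' : Forall S (firstn (length c) b)).
  { rewrite <- (firstn_skipn (length c) b) in Hb. apply Forall_app in Hb; tauto. }
  exists (firstn (length b) c ++ d), (firstn (length c) b ++ e). split.
  - apply Forall_app; auto.
  - apply lincomb_app; auto; eapply Forall_impl; eauto.
Qed.

Lemma in_span_zmul n x : in_span S x -> in_span S (zmul n x).
Proof.
  intros (c & b & Hb & <-). exists (map (Z.mul n) c), b. split; auto.
  rewrite zmul_lincomb; auto. eapply Forall_impl; eauto.
Qed.

Lemma saturation_subgrp : subgrp (saturation S).
Proof.
  split; [|split; [|split]].
  - intros x [H _]; auto.
  - split; auto with lat. exists 1; split; [lia|].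
    rewrite zmul0r by auto. exists nil, nil; split; auto.
  - intros x y [Hx (n & Hn & Sx)] [Hy (m & Hm & Sy)]. split; auto with lat.
    exists (n * m). split; [lia|]. rewrite zmulDr by auto.
    rewrite (Z.mul_comm n m) at 1. rewrite !zmulM by auto.
    apply in_spanD; apply in_span_zmul; auto.
  - intros x [Hx (n & Hn & Sx)]. split; auto with lat. exists n; split; auto.
    rewrite zmulNr, <- zmulN1 by auto with lat. apply in_span_zmul; auto.
Qed.

Lemma subset_saturation x : S x -> saturation S x.
Proof.
  intros Sx. split; auto. exists 1; split; [lia|]. exists (1 :: nil), (x :: nil).
  split; auto. simpl. rewrite ladd0r; auto with lat.
Qed.

End Span.

Lemma image_subgrp {L M : lattice} (f : L -> M) (S : L -> Prop) :
  is_abgroup L -> group_map f -> subgrp S -> subgrp (image f S).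
Proof.
  intros HL Hf (Sm & S0 & SD & SN). split; [|split; [|split]].
  - intros y (x & Hx & _ & ->). apply (gmap_mem Hf); auto.
  - exists l0. split; auto with lat. split; auto. symmetry; apply (gmap0 Hf).
  - intros y y' (x & Hx & Sx & ->) (x' & Hx' & Sx' & ->). exists (ladd x x').
    split; auto with lat. split; auto. symmetry; apply (gmapD Hf); auto.
  - intros y (x & Hx & Sx & ->). exists (lopp x).
    split; auto with lat. split; auto. symmetry; apply (gmapN Hf); auto.
Qed.

Section Quotient.
Variable L : lattice.
Hypothesis HL : is_abgroup L.
Variable S : L -> Prop.
Hypothesis HS : subgrp S.

Lemma qclass_eq u v : lmem u -> lmem v -> S (lsub u v) -> qclass S u = qclass S v.
Proof.
  destruct HS as (_ & _ & SD & SN). intros Hu Hv E.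
  apply functional_extensionality; intro y. apply propositional_extensionality.
  unfold qclass. split; intros [Hy Hs]; split; auto.
  - rewrite <- (lsub_trans _ HL y u v) by auto. apply SD; auto.
  - rewrite <- (lsub_trans _ HL y v u) by auto. apply SD; auto.
    rewrite <- loppB by auto. apply SN; auto.
Qed.

Lemma qclass_eq_sub u v : lmem u -> qclass S u = qclass S v -> S (lsub u v).
Proof.
  intros Hu E. assert (Hself : qclass S u u).
  { split; auto. rewrite lsubrr; auto. apply HS. }
  rewrite E in Hself. apply Hself.
Qed.

Lemma qrepP (q : quot L S) : lmem q -> lmem (qrep S q) /\ q = qclass S (qrep S q).
Proof. intros Hq. unfold qrep. apply epsilon_spec, Hq. Qed.

Lemma qrep_qclass x : lmem x ->
  lmem (qrep S (qclass S x)) /\ S (lsub (qrep S (qclass S x)) x).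
Proof.
  intros Hx. destruct (qrepP (qclass S x)) as [A B]; [exists x; auto|].
  split; auto. apply qclass_eq_sub; auto.
Qed.

Lemma qclassD x y : lmem x -> lmem y ->
  @ladd (quot L S) (qclass S x) (qclass S y) = qclass S (ladd x y).
Proof.
  intros. simpl. destruct (qrep_qclass x) as [A B]; auto.
  destruct (qrep_qclass y) as [C D]; auto. apply qclass_eq; auto with lat.
  rewrite lsubDD by auto. apply HS; auto.
Qed.

Lemma qclassN x : lmem x -> @lopp (quot L S) (qclass S x) = qclass S (lopp x).
Proof.
  intros. simpl. destruct (qrep_qclass x) as [A B]; auto.
  apply qclass_eq; auto with lat. rewrite lsubNN by auto. apply HS; auto.
Qed.

End Quotient.

Definition zsum {A} (F : A -> Z) (l : list A) : Z :=
  fold_right (fun a acc => F a + acc) 0 l.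

Lemma zsum_perm {A} (F : A -> Z) l l' : Permutation l l' -> zsum F l = zsum F l'.
Proof. induction 1; simpl; lia. Qed.
Lemma zsum_map {A B} (F : B -> Z) (g : A -> B) l :
  zsum F (map g l) = zsum (fun a => F (g a)) l.
Proof. induction l; simpl; lia. Qed.
Lemma zsum_ext {A} (F G : A -> Z) l :
  (forall a, In a l -> F a = G a) -> zsum F l = zsum G l.
Proof. induction l; simpl; intros; auto. rewrite H, IHl; auto. Qed.
Lemma zsumD {A} (F G : A -> Z) l : zsum (fun a => F a + G a) l = zsum F l + zsum G l.
Proof. induction l; simpl; lia. Qed.
Lemma zsumZ {A} (F : A -> Z) k l : zsum (fun a => k * F a) l = k * zsum F l.
Proof. induction l; simpl; lia. Qed.
Lemma zsum0 {A} (l : list A) : zsum (fun _ => 0) l = 0.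
Proof. induction l; simpl; lia. Qed.
Lemma zsum_sqr_ge0 {A} (F : A -> Z) l : 0 <= zsum (fun x => F x * F x) l.
Proof. induction l; simpl; nia. Qed.
Lemma zsum_sqr_ge {A} (F : A -> Z) l a :
  In a l -> F a * F a <= zsum (fun x => F x * F x) l.
Proof.
  induction l; simpl; intros []; subst.
  - pose proof (zsum_sqr_ge0 F l); lia.
  - specialize (IHl H). nia.
Qed.

Section RootDatum.
Variable R : preRootDatum.
Hypothesis HR : is_root_datum R.

Notation pr := (Rpair R).

Lemma rd_X : is_abgroup (RX R). Proof. apply HR. Qed.
Lemma rd_Xc : is_abgroup (RXc R). Proof. apply HR. Qed.
Lemma rd_pairl x : lmem x -> additive_Z (pr x). Proof. apply HR. Qed.
Lemma rd_pairr y : lmem y -> additive_Z (fun x => pr x y). Proof. apply HR. Qed.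
Lemma rd_root_mem a : Rroots R a -> lmem a. Proof. apply HR. Qed.
Lemma rd_coroot_mem a : Rroots R a -> lmem (Rcor R a). Proof. apply HR. Qed.
Lemma rd_pair_coroot a : Rroots R a -> pr a (Rcor R a) = 2. Proof. apply HR. Qed.
Lemma rd_reflect_root a b : Rroots R a -> Rroots R b ->
  Rroots R (lsub b (zmul (pr b (Rcor R a)) a)).
Proof. apply HR. Qed.
#[local] Hint Resolve rd_X rd_Xc rd_root_mem rd_coroot_mem rd_pairl rd_pairr : lat.

Lemma pair0l y : lmem y -> pr l0 y = 0.
Proof. intros. apply (additiveZ_0 _ rd_X (fun x => pr x y)); auto with lat. Qed.
Lemma pair0r x : lmem x -> pr x l0 = 0.
Proof. intros. apply (additiveZ_0 _ rd_Xc (pr x)); auto with lat. Qed.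
Lemma pairZl n x y : lmem x -> lmem y -> pr (zmul n x) y = n * pr x y.
Proof. intros. apply (additiveZ_zmul _ rd_X (fun x => pr x y)); auto with lat. Qed.
Lemma pairBl x x' y : lmem x -> lmem x' -> lmem y -> pr (lsub x x') y = pr x y - pr x' y.
Proof. intros. apply (additiveZ_B _ rd_X (fun x => pr x y)); auto with lat. Qed.
Lemma pairZr n x y : lmem x -> lmem y -> pr x (zmul n y) = n * pr x y.
Proof. intros. apply (additiveZ_zmul _ rd_Xc (pr x)); auto with lat. Qed.

Lemma pair_nondegl x x' : lmem x -> lmem x' ->
  (forall y, lmem y -> pr x y = pr x' y) -> x = x'.
Proof.
  intros Hx Hx' E. destruct HR as (_ & _ & (_ & _ & P3 & _) & _).
  destruct (P3 (pr x')) as (u & Hu & _ & Huniq); [apply rd_pairl; auto|].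
  rewrite (Huniq x), (Huniq x'); auto. intros y Hy; rewrite E; auto.
Qed.

Lemma pair_nondegr y y' : lmem y -> lmem y' ->
  (forall x, lmem x -> pr x y = pr x y') -> y = y'.
Proof.
  intros Hy Hy' E. destruct HR as (_ & _ & (_ & _ & _ & P4) & _).
  destruct (P4 (fun x => pr x y')) as (u & Hu & _ & Huniq); [apply rd_pairr; auto|].
  rewrite (Huniq y), (Huniq y'); auto. intros x Hx; rewrite E; auto.
Qed.

Lemma roots_NoDup_list : exists l, NoDup l /\ forall a, Rroots R a <-> In a l.
Proof.
  destruct HR as (_ & _ & _ & _ & (l & Hl) & _).
  assert (dec : forall x y : RX R, {x = y} + {x <> y})
    by (intros; apply excluded_middle_informative).
  exists (nodup dec l). split; [apply NoDup_nodup|]. intros a; rewrite nodup_In; auto.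
Qed.

Section InvariantForm.
Variable l : list (RX R).
Hypothesis Hnd : NoDup l.
Hypothesis Hl : forall a, Rroots R a <-> In a l.

(* The Weyl-invariant positive semidefinite form on the coweight lattice. *)
Definition root_form (y w : RXc R) : Z := zsum (fun g => pr g y * pr g w) l.

Lemma reflection_perm_roots a : Rroots R a ->
  Permutation l (map (fun g => lsub g (zmul (pr g (Rcor R a)) a)) l).
Proof.
  intros Ha. set (s := fun g => lsub g (zmul (pr g (Rcor R a)) a)).
  assert (Hsv : forall g, Rroots R g -> pr (s g) (Rcor R a) = - pr g (Rcor R a)).
  { intros g Hg. unfold s. rewrite pairBl, pairZl, rd_pair_coroot; auto with lat; lia. }
  assert (Hss : forall g, Rroots R g -> s (s g) = g).
  { intros g Hg. unfold s at 1. rewrite Hsv by auto. rewrite zmulN by auto with lat.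
    unfold s, lsub. rewrite loppK by auto with lat. apply (lsubK _ rd_X); auto with lat. }
  apply NoDup_Permutation; auto.
  - apply NoDup_map_NoDup_ForallPairs; auto. intros x y Hx Hy E.
    apply Hl in Hx; apply Hl in Hy. rewrite <- (Hss x), <- (Hss y), E; auto.
  - intros x; split; intros Hx.
    + apply in_map_iff. exists (s x). split; [apply Hss; apply Hl; auto|].
      apply Hl, rd_reflect_root; auto; apply Hl; auto.
    + apply in_map_iff in Hx as (g & <- & Hg). apply Hl, rd_reflect_root; auto. apply Hl; auto.
Qed.

(* Invariance of the form under the reflection s_a, evaluated against a^v. *)
Lemma root_form_coroot a y : Rroots R a -> lmem y ->
  2 * root_form y (Rcor R a) = pr a y * root_form (Rcor R a) (Rcor R a).
Proof.
  intros Ha Hy. unfold root_form.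
  set (F := fun g => pr g y * pr g (Rcor R a)).
  assert (E : zsum F l = zsum F (map (fun g => lsub g (zmul (pr g (Rcor R a)) a)) l))
    by (apply zsum_perm, reflection_perm_roots; auto).
  rewrite zsum_map in E.
  rewrite (zsum_ext (fun g => F (lsub g (zmul (pr g (Rcor R a)) a)))
             (fun g => - F g + pr a y * (pr g (Rcor R a) * pr g (Rcor R a)))) in E.
  - rewrite zsumD, zsumZ in E.
    assert (zsum (fun g => - F g) l = - zsum F l) by (clear; induction l; simpl; lia).
    lia.
  - intros g Hg. apply Hl in Hg. unfold F.
    rewrite !pairBl, !pairZl, rd_pair_coroot; auto with lat. nia.
Qed.

Lemma root_form_coroot_ge4 a : Rroots R a -> 4 <= root_form (Rcor R a) (Rcor R a).
Proof.
  intros Ha. pose proof (zsum_sqr_ge (fun g => pr g (Rcor R a)) l a) as H.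
  cbv beta in H. rewrite rd_pair_coroot in H by auto. apply H, Hl; auto.
Qed.

Lemma root_formDr y w w' : lmem w -> lmem w' ->
  root_form y (ladd w w') = root_form y w + root_form y w'.
Proof.
  intros. unfold root_form. rewrite <- zsumD. apply zsum_ext. intros g Hg.
  apply Hl in Hg. rewrite (rd_pairl g); auto with lat. lia.
Qed.

Lemma root_formZr y k w : lmem w -> root_form y (zmul k w) = k * root_form y w.
Proof.
  intros. unfold root_form. rewrite <- zsumZ. apply zsum_ext. intros g Hg.
  apply Hl in Hg. rewrite pairZr; auto with lat. lia.
Qed.

Definition kills_coroot_perp (w : RXc R) : Prop :=
  forall u, lmem u -> (forall a, Rroots R a -> pr u (Rcor R a) = 0) -> pr u w = 0.

(* By [root_form_coroot], N a * <a, y> = B(y, 2 a^v) with N a = B(a^v, a^v) >= 4;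
   a linear combination of roots needs the product of these factors as [M]. *)
Lemma root_span_form c b : Forall (Rroots R) b ->
  exists M w, 0 < M /\ lmem w /\ kills_coroot_perp w /\
    forall y, lmem y -> M * pr (lincomb c b) y = root_form y w.
Proof.
  revert c; induction b as [|be b IH]; intros [|c0 c] Hb.
  1-3: exists 1, l0; repeat split; auto with lat;
    [intros u Hu _; apply pair0r; auto
    |intros y Hy; simpl; rewrite pair0l by auto; unfold root_form;
     rewrite (zsum_ext _ (fun _ => 0)), zsum0; auto; intros g Hg;
     rewrite pair0r; [lia|apply rd_root_mem, Hl; auto]].
  inversion Hb; subst. destruct (IH c H2) as (M & w & HM & Hw & Hkill & Hrep).
  set (N := root_form (Rcor R be) (Rcor R be)). pose proof (root_form_coroot_ge4 be H1).
  exists (M * N), (ladd (zmul N w) (zmul (2 * c0 * M) (Rcor R be))).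
  assert (Hlc : lmem (lincomb c b)).
  { apply lmem_lincomb; auto with lat. eapply Forall_impl; [|apply H2]; auto with lat. }
  repeat split; [nia|auto with lat| |].
  - intros u Hu Hz. rewrite (rd_pairl u), !pairZr, Hkill, Hz; auto with lat; lia.
  - intros y Hy. cbn [lincomb]. rewrite (rd_pairr y), pairZl; auto with lat.
    rewrite root_formDr, !root_formZr by auto with lat.
    rewrite <- Hrep by auto. pose proof (root_form_coroot be y H1 Hy). fold N in H0. nia.
Qed.

(* B(w, w) = 0 forces <a, w> = 0 for every root a, hence <z, -> = 0. *)
Lemma saturation_coroot_perp_eq0_list z : lmem z -> saturation (Rroots R) z ->
  (forall a, Rroots R a -> pr z (Rcor R a) = 0) -> z = l0.
Proof.
  intros Hz [_ (n & Hn & c & b & Hb & Hc)] Hperp.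
  destruct (root_span_form c b Hb) as (M & w & HM & Hw & Hkill & Hrep).
  assert (Hform : forall y, lmem y -> M * (n * pr z y) = root_form y w).
  { intros y Hy. rewrite <- Hrep, Hc, pairZl; auto. }
  assert (Hww : root_form w w = 0) by (rewrite <- Hform, Hkill; auto; lia).
  assert (Hw0 : forall g, In g l -> pr g w = 0).
  { intros g Hg. pose proof (zsum_sqr_ge (fun g => pr g w) l g Hg).
    unfold root_form in Hww. cbv beta in H. nia. }
  apply pair_nondegl; auto with lat. intros y Hy.
  rewrite pair0l by auto.
  assert (root_form y w = 0).
  { unfold root_form. rewrite (zsum_ext _ (fun _ => 0)), zsum0; auto.
    intros g Hg; rewrite Hw0; auto; lia. }
  rewrite <- Hform in H by auto. nia.
Qed.

End InvariantForm.

Lemma saturation_coroot_perp_eq0 z : lmem z -> saturation (Rroots R) z ->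
  (forall a, Rroots R a -> pr z (Rcor R a) = 0) -> z = l0.
Proof.
  destruct roots_NoDup_list as (l & Hnd & Hl).
  apply (saturation_coroot_perp_eq0_list l Hnd Hl).
Qed.

End RootDatum.

#[global] Hint Resolve rd_X rd_Xc rd_root_mem rd_coroot_mem rd_pairl rd_pairr : lat.

Section Transport.
Variables R R' : preRootDatum.
Hypothesis HR : is_root_datum R.
Variable phi : RX R -> RX R'.
Variable psi : RXc R -> RXc R'.
Hypothesis Hphi : group_map phi.
Hypothesis phi_inj : injective_on phi.
Hypothesis phi_surj : surjective_on phi.
Hypothesis Hpsi : group_map psi.
Hypothesis psi_inj : injective_on psi.
Hypothesis psi_surj : surjective_on psi.
Hypothesis Hpair : forall x y, lmem x -> lmem y -> Rpair R' (phi x) (psi y) = Rpair R x y.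
Hypothesis Hroots : forall p, Rroots R' p <-> exists a, Rroots R a /\ p = phi a.
Hypothesis Hcor : forall a, Rroots R a -> Rcor R' (phi a) = psi (Rcor R a).

Let phi_mem := gmap_mem Hphi.
Let psi_mem := gmap_mem Hpsi.
#[local] Hint Resolve phi_mem psi_mem : lat.

Lemma perfect_pairing_transport : perfect_pairing (Rpair R').
Proof.
  destruct HR as (_ & _ & (P1 & P2 & P3 & P4) & _).
  split; [|split; [|split]].
  - intros x' Hx' y1 y2 Hy1 Hy2.
    destruct (phi_surj x' Hx') as (x & Hx & <-).
    destruct (psi_surj y1 Hy1) as (a & Ha & <-). destruct (psi_surj y2 Hy2) as (b & Hb & <-).
    rewrite <- (gmapD Hpsi), !Hpair by auto with lat. apply P1; auto.
  - intros y' Hy' x1 x2 Hx1 Hx2.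
    destruct (psi_surj y' Hy') as (y & Hy & <-).
    destruct (phi_surj x1 Hx1) as (a & Ha & <-). destruct (phi_surj x2 Hx2) as (b & Hb & <-).
    rewrite <- (gmapD Hphi), !Hpair by auto with lat. apply (P2 y); auto.
  - intros g Hg. destruct (P3 (fun y => g (psi y))) as (x & Hx & Hr & Hu).
    { intros a b Ha Hb. rewrite (gmapD Hpsi); auto with lat. }
    exists (phi x). split; auto with lat. split.
    + intros y' Hy'. destruct (psi_surj y' Hy') as (y & Hy & <-). rewrite Hpair; auto.
    + intros x' Hx' Hr'. destruct (phi_surj x' Hx') as (u & Hu' & <-). f_equal.
      apply Hu; auto. intros y Hy. rewrite Hr', Hpair; auto with lat.
  - intros g Hg. destruct (P4 (fun x => g (phi x))) as (y & Hy & Hr & Hu).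
    { intros a b Ha Hb. rewrite (gmapD Hphi); auto with lat. }
    exists (psi y). split; auto with lat. split.
    + intros x' Hx'. destruct (phi_surj x' Hx') as (x & Hx & <-). rewrite Hpair; auto.
    + intros y' Hy' Hr'. destruct (psi_surj y' Hy') as (u & Hu' & <-). f_equal.
      apply Hu; auto. intros x Hx. rewrite Hr', Hpair; auto with lat.
Qed.

Lemma root_datum_transport : is_root_datum R'.
Proof.
  pose proof HR as (HX & HXc & _ & _ & (l & Hl) & _ & Hci & _ & _ & Hsc & Hred).
  split; [apply (lattice_transport _ _ (rd_X _ HR) phi); auto|].
  split; [apply (lattice_transport _ _ (rd_Xc _ HR) psi); auto|].
  split; [apply perfect_pairing_transport|].
  split; [|split; [|split; [|split; [|split; [|split; [|split]]]]]].
  - intros p Hp. apply Hroots in Hp as (a & Ha & ->). auto with lat.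
  - exists (map phi l). intros p. rewrite Hroots. split.
    + intros (a & Ha & ->). apply in_map, Hl; auto.
    + intros Hin. apply in_map_iff in Hin as (a & <- & Ha). exists a; split; auto. apply Hl; auto.
  - intros p Hp. apply Hroots in Hp as (a & Ha & ->). rewrite Hcor; auto with lat.
  - intros p q Hp Hq E. apply Hroots in Hp as (a & Ha & ->). apply Hroots in Hq as (b & Hb & ->).
    rewrite !Hcor in E by auto. f_equal. apply Hci; auto. apply psi_inj; auto with lat.
  - intros p Hp. apply Hroots in Hp as (a & Ha & ->). rewrite Hcor, Hpair; auto with lat.
    apply rd_pair_coroot; auto.
  - intros p q Hp Hq. apply Hroots in Hp as (a & Ha & ->). apply Hroots in Hq as (b & Hb & ->).
    apply Hroots. exists (lsub b (zmul (Rpair R b (Rcor R a)) a)).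
    split; [apply rd_reflect_root; auto|].
    rewrite Hcor, Hpair, (gmapB (rd_X _ HR) Hphi), (gmap_zmul (rd_X _ HR) Hphi); auto with lat.
  - intros p q Hp Hq. apply Hroots in Hp as (a & Ha & ->). apply Hroots in Hq as (b & Hb & ->).
    destruct (Hsc a b Ha Hb) as (c & Hc & Ec). exists (phi c). split.
    + apply Hroots; eauto.
    + rewrite !Hcor, Ec, Hpair, (gmapB (rd_Xc _ HR) Hpsi), (gmap_zmul (rd_Xc _ HR) Hpsi); auto with lat.
  - intros p Hp Hp2. apply Hroots in Hp as (a & Ha & ->).
    rewrite <- (gmap_zmul (rd_X _ HR) Hphi) in Hp2 by auto with lat.
    apply Hroots in Hp2 as (c & Hc & Ec).
    apply phi_inj in Ec; auto with lat. apply (Hred a); auto. rewrite Ec; auto.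
Qed.

Lemma iso_transport : is_iso R R' phi.
Proof.
  split; [|split; auto]. split; [apply Hphi|].
  exists (inv_on phi).
  assert (Htau : forall a, Rroots R a -> inv_on phi (phi a) = a)
    by (intros; apply inv_onK; auto with lat).
  split; [|split; [|split; [|split]]].
  - intros p Hp. apply Hroots in Hp as (a & Ha & ->). rewrite Htau; auto.
  - intros p q Hp Hq E. apply Hroots in Hp as (a & Ha & ->). apply Hroots in Hq as (b & Hb & ->).
    rewrite !Htau in E by auto. subst; auto.
  - intros a Ha. exists (phi a). split; [apply Hroots; eauto|]. apply Htau; auto.
  - intros p Hp. apply Hroots in Hp as (a & Ha & ->). rewrite Htau; auto.
  - exists (inv_on psi). split; [split|split].
    + intros g Hg; apply inv_onP; auto.
    + intros g g' Hg Hg'. destruct (psi_surj g Hg) as (y & Hy & <-).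
      destruct (psi_surj g' Hg') as (y' & Hy' & <-).
      rewrite <- (gmapD Hpsi), !inv_onK; auto with lat.
    + intros x g Hx Hg. destruct (psi_surj g Hg) as (y & Hy & <-).
      rewrite inv_onK, Hpair; auto.
    + intros p Hp. apply Hroots in Hp as (a & Ha & ->).
      rewrite Hcor, !inv_onK; auto with lat.
Qed.

End Transport.

Section DualInverse.
Variable R : preRootDatum.
Hypothesis HR : is_root_datum R.
Variable M : lattice.
Variable phi : RX R -> M.
Hypothesis Hphi : group_map phi.
Hypothesis phi_inj : injective_on phi.
Hypothesis phi_surj : surjective_on phi.

(* The inverse transpose of [phi]; it vanishes off [M] as [homlat] requires. *)
Definition dual_inv (y : RXc R) : homlat M :=
  fun p => if excluded_middle_informative (lmem p) then Rpair R (inv_on phi p) y else 0.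

Let phi_mem := gmap_mem Hphi.
#[local] Hint Resolve phi_mem : lat.

Lemma dual_inv_phi x y : lmem x -> dual_inv y (phi x) = Rpair R x y.
Proof.
  intros Hx. unfold dual_inv.
  destruct (excluded_middle_informative _) as [_|H]; [|exfalso; auto with lat].
  rewrite inv_onK; auto.
Qed.

Lemma inv_onD p p' : lmem p -> lmem p' ->
  inv_on phi (ladd p p') = ladd (inv_on phi p) (inv_on phi p').
Proof.
  intros Hp Hp'. destruct (inv_onP phi p) as [A B]; auto.
  destruct (inv_onP phi p') as [C D]; auto.
  rewrite <- B, <- D at 1. rewrite <- (gmapD Hphi), inv_onK; auto with lat.
Qed.

Lemma dual_inv_group_map : group_map dual_inv.
Proof.
  pose proof (abgroup_transport _ _ (rd_X _ HR) phi Hphi phi_surj) as HM.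
  assert (Hpair : forall p, lmem p -> additive_Z (Rpair R (inv_on phi p)))
    by (intros; apply rd_pairl, inv_onP; auto).
  split; [split|split].
  - intros y Hy. split.
    + intros p p' Hp Hp'. unfold dual_inv.
      repeat (destruct (excluded_middle_informative _) as [?|Hn]; [|exfalso; auto with lat]).
      rewrite inv_onD by auto. apply rd_pairr; auto; apply inv_onP; auto.
    + intros p Hp. unfold dual_inv. destruct (excluded_middle_informative _); tauto.
  - intros y y' Hy Hy'. apply functional_extensionality; intro p. unfold dual_inv; simpl.
    destruct (excluded_middle_informative _); auto. apply Hpair; auto.
  - intros y Hy. apply functional_extensionality; intro p. unfold dual_inv; simpl.
    destruct (excluded_middle_informative _); auto.
    apply (additiveZ_N _ (rd_Xc _ HR)); auto.
  - apply functional_extensionality; intro p. unfold dual_inv; simpl.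
    destruct (excluded_middle_informative _); auto.
    apply (additiveZ_0 _ (rd_Xc _ HR)); auto.
Qed.

Lemma dual_inv_inj : injective_on dual_inv.
Proof.
  intros y y' Hy Hy' E. apply (pair_nondegr R HR); auto. intros x Hx.
  rewrite <- !dual_inv_phi, E; auto.
Qed.

Lemma dual_inv_surj : surjective_on dual_inv.
Proof.
  intros g [Hg Hg0]. destruct HR as (_ & _ & (_ & _ & _ & P4) & _).
  destruct (P4 (fun x => g (phi x))) as (y & Hy & Hr & _).
  { intros x x' Hx Hx'. rewrite (gmapD Hphi) by auto. apply Hg; auto with lat. }
  exists y. split; auto. apply functional_extensionality; intro p. unfold dual_inv.
  destruct (excluded_middle_informative _) as [Hp|Hp]; [|symmetry; apply Hg0; auto].
  destruct (inv_onP phi p) as [A B]; auto. rewrite <- Hr, B; auto.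
Qed.

End DualInverse.

Arguments dual_inv {R M} phi y.

Section CentralProductDecomposition.
Variables R1 R2 : preRootDatum.
Variable f : RX R2 -> RX R1.
Hypothesis HR1 : is_root_datum R1.
Hypothesis HR2 : is_root_datum R2.
Hypothesis Hf : is_hom R2 R1 f.

Local Notation S2 := (saturation (Rroots R2)).
Local Notation FS := (image f S2).
Local Notation h1 := (qproj FS : RX R1 -> quot (RX R1) FS).
Local Notation h2 := (fun q : rad_lattice R2 => qproj FS (f (qrep S2 q))).
Local Notation CP := (central_product R1 (radical R2) (quot (RX R1) FS) h1 h2).
Local Notation phi := (fun x : RX R2 => (f x, qproj S2 x) : RX CP).

Let HX1 := rd_X R1 HR1.
Let HX2 := rd_X R2 HR2.
#[local] Hint Resolve HX1 HX2 : lat.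

Lemma hom_group_map : group_map f.
Proof. apply additive_group_map; auto with lat. apply Hf. Qed.

Let f_mem := gmap_mem hom_group_map.
#[local] Hint Resolve f_mem : lat.

Lemma saturation_roots_subgrp : subgrp S2.
Proof. apply saturation_subgrp; auto with lat. Qed.

Lemma image_saturation_subgrp : subgrp FS.
Proof. apply image_subgrp; auto using hom_group_map, saturation_roots_subgrp with lat. Qed.

Lemma h2_qclass x : lmem x -> h2 (qclass S2 x) = qclass FS (f x).
Proof.
  intros Hx. unfold qproj.
  destruct (qrep_qclass _ HX2 S2 saturation_roots_subgrp x Hx) as [Hrep Hsub].
  apply (qclass_eq _ HX1 FS image_saturation_subgrp); auto with lat.
  rewrite <- (gmapB HX2 hom_group_map) by auto.
  exists (lsub (qrep S2 (qclass S2 x)) x). auto with lat.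
Qed.

Lemma embed_group_map : group_map phi.
Proof.
  pose proof saturation_roots_subgrp as HS2. pose proof hom_group_map as Hfg.
  split; [split|split].
  - intros x Hx. split; [split|]; simpl; eauto with lat.
    unfold qproj. rewrite h2_qclass; auto.
  - intros x y Hx Hy. unfold qproj.
    rewrite <- (qclassD _ HX2 S2 HS2 x y Hx Hy), (gmapD Hfg) by auto. reflexivity.
  - intros x Hx. unfold qproj.
    rewrite <- (qclassN _ HX2 S2 HS2 x Hx), (gmapN Hfg) by auto. reflexivity.
  - unfold qproj. simpl. rewrite (gmap0 Hfg). reflexivity.
Qed.

(* A member (x1, x + Phi2^T) has x1 = f x modulo f(Phi2^T); correcting x by the
   defect gives a preimage. *)
Lemma embed_surj : surjective_on phi.
Proof.
  pose proof saturation_roots_subgrp as HS2. pose proof hom_group_map as Hfg.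
  intros [x1 q] [[Hx1 Hq] Hcompat]. simpl in Hx1, Hq, Hcompat.
  destruct Hq as (x & Hx & ->). unfold qproj in Hcompat.
  rewrite h2_qclass in Hcompat by auto.
  apply (qclass_eq_sub _ HX1 FS image_saturation_subgrp) in Hcompat; auto.
  destruct Hcompat as (s & Hs & Ss & Es).
  exists (ladd x s). split; auto with lat. unfold qproj. f_equal.
  - rewrite (gmapD Hfg), <- Es by auto. rewrite laddC by auto with lat.
    apply lsubK; auto with lat.
  - apply (qclass_eq _ HX2 S2 HS2); auto with lat.
    replace (lsub (ladd x s) x) with s; auto.
    unfold lsub. rewrite laddC, laddKl; auto with lat.
Qed.

(* The kernel lies in Phi2^T and pairs trivially with the coroots (tau a)^v = f^v a^v. *)
Lemma embed_inj : injective_on phi.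
Proof.
  destruct Hf as [_ (tau & _ & _ & Htau_surj & _ & fc & _ & Hfc_pair & Hfc_cor)].
  intros x y Hx Hy E. unfold qproj in E. injection E as Ef Eq.
  apply (qclass_eq_sub _ HX2 S2 saturation_roots_subgrp) in Eq; auto.
  apply (lsub_eq0 _ HX2); auto.
  apply (saturation_coroot_perp_eq0 R2 HR2); auto with lat.
  intros a Ha. destruct (Htau_surj a Ha) as (b & Hb & <-).
  rewrite <- Hfc_cor, Hfc_pair, (gmapB HX2 hom_group_map), Ef, lsubrr by auto with lat.
  apply pair0l; auto with lat.
Qed.

Lemma root_in_saturation_qclass a : Rroots R2 a -> qclass S2 a = qclass S2 l0.
Proof.
  intros Ha. apply (qclass_eq _ HX2 S2 saturation_roots_subgrp); auto with lat.
  rewrite lsubr0 by auto with lat. apply subset_saturation; auto with lat.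
Qed.

Lemma central_product_roots p : Rroots CP p <-> exists a, Rroots R2 a /\ p = phi a.
Proof.
  destruct Hf as [_ (tau & Htau & _ & Htau_surj & Hftau & _)].
  destruct p as [x1 q]. simpl. split.
  - intros [[Hr Hq]|[_ []]]. exists (tau x1). split; auto. unfold qproj. f_equal.
    + rewrite Hftau; auto.
    + rewrite root_in_saturation_qclass, Hq; auto.
  - intros (a & Ha & E). destruct (Htau_surj a Ha) as (b & Hb & <-). unfold qproj in E.
    injection E as -> ->. left. rewrite Hftau, root_in_saturation_qclass; auto.
Qed.

Lemma central_product_coroots a : Rroots R2 a ->
  Rcor CP (phi a) = dual_inv phi (Rcor R2 a).
Proof.
  destruct Hf as [_ (tau & Htau & _ & Htau_surj & Hftau & fc & _ & Hfc_pair & Hfc_cor)].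
  intros Ha. destruct (Htau_surj a Ha) as (b & Hb & <-).
  apply functional_extensionality; intro p. unfold dual_inv. simpl. unfold iotaB.
  rewrite Hftau by auto.
  destruct (excluded_middle_informative (Rroots R1 b)) as [_|Hr]; [|contradiction].
  destruct (excluded_middle_informative _) as [Hp|Hp];
    destruct (excluded_middle_informative _) as [Hp'|Hp']; simpl in *; try tauto.
  destruct (inv_onP phi p embed_surj Hp') as [Hx Ep].
  rewrite <- Ep at 1. simpl.
  rewrite (pair0r R2 HR2), <- Hfc_cor, Hfc_pair by (try apply qrepP, Hp'; auto with lat).
  lia.
Qed.

End CentralProductDecomposition.

Theorem mainTheorem6 (R1 R2 : preRootDatum) (f : RX R2 -> RX R1) :
  is_root_datum R1 -> is_root_datum R2 ->
  is_hom R2 R1 f -> surjective_on f ->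
  let S2 := saturation (Rroots R2) in
  let FS := image f S2 in
  let h1 : RX R1 -> quot (RX R1) FS := qproj FS in
  let h2 : rad_lattice R2 -> quot (RX R1) FS :=
    fun q => qproj FS (f (qrep S2 q)) in
  let CP := central_product R1 (radical R2) (quot (RX R1) FS) h1 h2 in
  let phi : RX R2 -> RX CP := fun x => (f x, qproj S2 x) in
  is_root_datum CP /\ is_iso R2 CP phi /\
  (forall x, lmem x -> f x = fst (phi x)).
Proof.
  (* Surjectivity of f only serves, in the paper, to make h2 surjective, which
     [central_product] does not require. *)
  intros HR1 HR2 Hf _ S2 FS h1 h2 CP phi.
  pose proof (embed_group_map R1 R2 f HR1 HR2 Hf) as Hphi.
  pose proof (embed_inj R1 R2 f HR1 HR2 Hf) as phi_inj.
  pose proof (embed_surj R1 R2 f HR1 HR2 Hf) as phi_surj.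
  pose proof (dual_inv_group_map R2 HR2 _ phi Hphi phi_inj phi_surj) as Hpsi.
  pose proof (dual_inv_inj R2 HR2 _ phi Hphi phi_inj) as psi_inj.
  pose proof (dual_inv_surj R2 HR2 _ phi Hphi phi_surj) as psi_surj.
  assert (Hpair : forall x y, lmem x -> lmem y ->
            Rpair CP (phi x) (dual_inv phi y) = Rpair R2 x y)
    by (intros; apply dual_inv_phi; auto).
  pose proof (central_product_roots R1 R2 f HR2 Hf) as Hroots.
  pose proof (central_product_coroots R1 R2 f HR1 HR2 Hf) as Hcor.
  split; [|split].
  - exact (root_datum_transport R2 CP HR2 phi _ Hphi phi_inj phi_surj
             Hpsi psi_inj psi_surj Hpair Hroots Hcor).
  - exact (iso_transport R2 CP HR2 phi _ Hphi phi_inj phi_surj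
             Hpsi psi_inj psi_surj Hpair Hroots Hcor).
  - reflexivity.
Qed.
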